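(* Let $F$ be a vector lattice endowed with a locally solid additive convergence $\eta$, let $A\subset F$, and let $E,H$ be ideals of $F$. Then: (i) $u_{A}\eta=u_{I(A)}\eta$, and this is the weakest locally solid additive convergence on $F$ which is stronger than $\eta$ on $[0_{F},|a|]$ for every $a\in A$; moreover $u_A\eta$ coincides with $\eta$ on $[0_F,|a|]$ for every $a\in A$. (ii) For a net $(f_\alpha)_{\alpha}\subset F_+$: $f_{\alpha}\xrightarrow{u_{A}\eta} 0_{F}$ iff $g_{\alpha}\xrightarrow{\eta} 0_{F}$ for every $a\in A$ and every net $(g_{\alpha})\subset[0_{F},|a|]$ (indexed by the same set) with $0_{F}\le g_{\alpha}\le f_{\alpha}$ for every $\alpha$. (iii) $u_{H}u_{E}\eta=u_{E\cap H}\eta$. In particular, $u_{E}u\eta=uu_{E}\eta=u_{E}u_{E}\eta=u_{E}\eta$. (iv) If $\eta$ is idempotent, then $u_{A}\eta=u_{\overline{I(A)}}\eta$. (v) If $\eta$ is idempotent and $h\in F_{+}$ is a topological unit, then for a net $(f_{\alpha})\subset F_{+}$ we have $f_{\alpha}\xrightarrow{u\eta} 0_{F}$ iff $h\wedge f_{\alpha}\xrightarrow{\eta} 0_{F}$.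
   Context: A convergence on a vector lattice $F$ is locally solid additive if addition and $f\mapsto -f$ are continuous and $|e_\alpha|\le|f_\alpha|$, $f_\alpha\to0_F$ imply $e_\alpha\to 0_F$. For $A\subset F$, $u_A\eta$ is the locally solid additive convergence on $F$ given by: $f_\alpha\xrightarrow{u_A\eta}f$ iff $|a|\wedge|f_\alpha-f|\xrightarrow{\eta}0_F$ for every $a\in A$; $u\eta:=u_F\eta$. $I(A)$ denotes the ideal generated by $A$. A convergence $\theta$ is stronger than $\eta$ on a set $S$ if whenever a net in $S$ $\theta$-converges to a point of $S$, it $\eta$-converges to that point; ''coincides on $S$'' means both directions. A set is closed if it contains the limits of all convergent nets in it; $\overline{G}$ (closure w.r.t. $\eta$) is the intersection of all closed sets containing $G$. $\eta$ is idempotent if for any nets $(f_{\alpha})_{\alpha\in A},(g_{\beta})_{\beta\in B}\subset F_{+}$ with $g_{\beta}\xrightarrow{\eta}0_{F}$ and $(f_{\alpha}-g_{\beta})^{+}\xrightarrow[\alpha]{\eta}0_{F}$ for every $\beta$, one has $f_{\alpha}\xrightarrow{\eta}0_{F}$. An element $h\in F_+$ is a topological unit if the principal ideal $F_h=\bigcup_{\lambda\ge0}\lambda[-h,h]$ satisfies $\overline{F_h}=F$. *)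

From HB Require Import structures.
From mathcomp Require Import all_boot all_order all_algebra.
From mathcomp Require Import classical_sets reals.

Set Implicit Arguments.
Unset Strict Implicit.
Unset Printing Implicit Defensive.

Import Order.TTheory GRing.Theory Num.Theory.
Local Open Scope ring_scope.

HB.mixin Record Lmodule_isVectorLattice (R : realType) V
    of Num.POrderedZmodule V & GRing.Lmodule R V := {
  vsup : V -> V -> V;
  vinf : V -> V -> V;
  vsup_ubl : forall x y : V, x <= vsup x y;
  vsup_ubr : forall x y : V, y <= vsup x y;
  vsup_least : forall x y z : V, x <= z -> y <= z -> vsup x y <= z;
  vinf_lbl : forall x y : V, vinf x y <= x;
  vinf_lbr : forall x y : V, vinf x y <= y;
  vinf_greatest : forall x y z : V, z <= x -> z <= y -> z <= vinf x y;
  vl_leD : forall x y z : V, x <= y -> x + z <= y + z;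
  vl_leZ : forall (a : R) (x y : V), 0 <= a -> x <= y -> a *: x <= a *: y
}.

#[short(type="vectorLatticeType")]
HB.structure Definition VectorLattice (R : realType) :=
  { V of Lmodule_isVectorLattice R V & Num.POrderedZmodule V & GRing.Lmodule R V }.

Section VL.
Variables (R : realType) (F : vectorLatticeType R).

Definition vabs (x : F) : F := vsup x (- x).
Definition vpos (x : F) : F := vsup x 0.
Definition vmeet (x y : F) : F := vinf x y.

Definition ointerval (x y : F) : set F := fun z => (x <= z) /\ (z <= y).

Definition is_ideal (E : set F) : Prop :=
  E 0 /\
  (forall x y, E x -> E y -> E (x + y)) /\
  (forall (l : R) x, E x -> E (l *: x)) /\
  (forall x y, (vabs x <= vabs y) -> E y -> E x).

Definition ideal_gen (A : set F) : set F :=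
  fun x => forall E : set F, is_ideal E -> (forall a, A a -> E a) -> E x.

Definition principal_ideal (h : F) : set F :=
  fun x => exists l : R, 0 <= l /\ exists y, ointerval (- h) h y /\ x = l *: y.
End VL.

Record dirType := DirType {
  dcar :> Type;
  dle : dcar -> dcar -> Prop;
  dle_refl : forall a, dle a a;
  dle_trans : forall a b c, dle a b -> dle b c -> dle a c;
  dir_ub : forall a b, exists c, dle a c /\ dle b c;
  dir_inh : inhabited dcar
}.

Definition convergence (X : Type) := forall D : dirType, (D -> X) -> X -> Prop.

Definition quasi_subnet (X : Type) (D : dirType) (f : D -> X)
  (E : dirType) (g : E -> X) : Prop :=
  forall a : D, exists e0 : E, forall e : E, dle e0 e ->
    exists a' : D, dle a a' /\ g e = f a'.

Definition is_convergence (X : Type) (eta : convergence X) : Prop :=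
  (forall (D : dirType) (x : X), eta D (fun _ => x) x) /\
  (forall (D : dirType) (f : D -> X) (x : X) (E : dirType) (g : E -> X),
      eta D f x -> quasi_subnet f g -> eta E g x).

Section Conv.
Variables (R : realType) (F : vectorLatticeType R).

Definition conv_stronger (theta eta : convergence F) : Prop :=
  forall (D : dirType) (f : D -> F) x, theta D f x -> eta D f x.

Definition conv_eq (theta eta : convergence F) : Prop :=
  forall (D : dirType) (f : D -> F) x, theta D f x <-> eta D f x.

Definition stronger_on (theta eta : convergence F) (S : set F) : Prop :=
  forall (D : dirType) (f : D -> F) x, (forall a, S (f a)) -> S x -> theta D f x -> eta D f x.

Definition coincide_on (theta eta : convergence F) (S : set F) : Prop :=
  stronger_on theta eta S /\ stronger_on eta theta S.

Definition ls_additive (eta : convergence F) : Prop :=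
  is_convergence eta /\
  (forall (D : dirType) (f g : D -> F) x y,
      eta D f x -> eta D g y -> eta D (fun a => f a + g a) (x + y)) /\
  (forall (D : dirType) (f : D -> F) x, eta D f x -> eta D (fun a => - f a) (- x)) /\
  (forall (D : dirType) (e f : D -> F),
      (forall a, (vabs (e a) <= vabs (f a))) -> eta D f 0 -> eta D e 0).

Definition uconv (A : set F) (eta : convergence F) : convergence F :=
  fun D f x => forall a, A a -> eta D (fun i => vmeet (vabs a) (vabs (f i - x))) 0.

Definition uconvT (eta : convergence F) : convergence F := uconv setT eta.

Definition conv_closed (eta : convergence F) (G : set F) : Prop :=
  forall (D : dirType) (f : D -> F) x, (forall a, G (f a)) -> eta D f x -> G x.

Definition conv_closure (eta : convergence F) (G : set F) : set F :=
  fun x => forall C : set F, conv_closed eta C -> (forall y, G y -> C y) -> C x.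

Definition conv_idempotent (eta : convergence F) : Prop :=
  forall (D B : dirType) (f : D -> F) (g : B -> F),
    (forall a, (0 <= f a)) -> (forall b, (0 <= g b)) ->
    eta B g 0 ->
    (forall b, eta D (fun a => vpos (f a - g b)) 0) ->
    eta D f 0.

Definition topological_unit (eta : convergence F) (h : F) : Prop :=
  (0 <= h) /\ forall x, conv_closure eta (principal_ideal h) x.
End Conv.

Arguments uconv {R F} A eta D f x.
Arguments uconvT {R F} eta D f x.

From HB Require Import structures.
From mathcomp Require Import all_boot all_order all_algebra.
From mathcomp Require Import classical_sets reals boolp.

(* Everything rests on one observation: for a net y >= 0, the set of b with
   |b| /\ y_i -> 0 is an ideal (by the Riesz inequality
   w /\ (u + v) <= w /\ u + w /\ v), and it is eta-closed when eta is
   idempotent.  Since f_i -> x in u_A eta says exactly that A lies in this set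
   for y = |f - x|, the ideal I(A) and, under idempotence, its closure lie in it
   too; for a topological unit h that closure, with A = {h}, is all of F.
   The remaining claims follow from solidity: on [0, |a|] the truncation by |a|
   is harmless, and |b| /\ (|a| /\ z) = (|b| /\ |a|) /\ z reduces iterated
   modifications to u_{E cap H}. *)

Set Implicit Arguments.
Unset Strict Implicit.
Unset Printing Implicit Defensive.

Import Order.TTheory GRing.Theory Num.Theory.
Local Open Scope ring_scope.
Local Open Scope classical_set_scope.

Section VectorLatticeTheory.
Variables (R : realType) (F : vectorLatticeType R).
Implicit Types (x y z u v w c : F).

Lemma vlerD2r x y z : x <= y -> x + z <= y + z.
Proof. exact: vl_leD. Qed.

Lemma vlerD2l x y z : x <= y -> z + x <= z + y.
Proof. by move=> lexy; rewrite ![z + _]addrC; apply: vlerD2r. Qed.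

Lemma vlerD x y u v : x <= y -> u <= v -> x + u <= y + v.
Proof. by move=> lexy leuv; apply: le_trans (vlerD2r u lexy) (vlerD2l y leuv). Qed.

Lemma vlerN2 x y : x <= y -> - y <= - x.
Proof. by move=> lexy; have := vlerD2r (- x - y) lexy; rewrite addrA subrr add0r addrCA subrr addr0. Qed.

Lemma vlerBlDr x y z : x - z <= y <-> x <= y + z.
Proof.
split=> h; first by have := vlerD2r z h; rewrite subrK.
by have := vlerD2r (- z) h; rewrite addrK.
Qed.

Lemma vler_wpDl x y : 0 <= y -> x <= y + x.
Proof. by move=> y_ge0; have := vlerD2r x y_ge0; rewrite add0r. Qed.

Lemma vaddr_ge0 x y : 0 <= x -> 0 <= y -> 0 <= x + y.
Proof. by move=> x_ge0 y_ge0; have := vlerD x_ge0 y_ge0; rewrite addr0. Qed.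

Lemma vmulrn_ge0 x n : 0 <= x -> 0 <= x *+ n.
Proof. by move=> x_ge0; elim: n => [|n IHn]; rewrite ?mulr0n // mulrS vaddr_ge0. Qed.

Lemma vlerZ2r (l m : R) v : 0 <= v -> l <= m -> l *: v <= m *: v.
Proof.
move=> v_ge0 lelm; have := vl_leZ (m - l) (0 : F) v; rewrite scaler0 subr_ge0.
move=> /(_ lelm v_ge0) /(vlerD2l (l *: v)).
by rewrite addr0 -scalerDl addrC subrK.
Qed.

Lemma vge0_double v : 0 <= v + v -> 0 <= v.
Proof.
have half_ge0 : 0 <= (2 : R)^-1 by rewrite invr_ge0 ler0n.
move=> /(vl_leZ _ _ _ half_ge0).
by rewrite scaler0 -mulr2n -scaler_nat scalerA mulVf ?scale1r ?pnatr_eq0.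
Qed.

Lemma vabs_ge0 x : 0 <= vabs x.
Proof. by apply: vge0_double; rewrite -(subrr x) vlerD ?vsup_ubl ?vsup_ubr. Qed.

Lemma vabs_le x c : x <= c -> - x <= c -> vabs x <= c.
Proof. exact: vsup_least. Qed.

Lemma ger0_vabs x : 0 <= x -> vabs x = x.
Proof.
move=> x_ge0; apply/le_anti; rewrite vsup_ubl vabs_le //.
by apply: (@le_trans _ _ 0) => //; rewrite -oppr0 vlerN2.
Qed.

Lemma vabs0 : vabs (0 : F) = 0. Proof. by rewrite ger0_vabs. Qed.

Lemma vabs_id x : vabs (vabs x) = vabs x. Proof. by rewrite ger0_vabs ?vabs_ge0. Qed.

Lemma vabsN x : vabs (- x) = vabs x.
Proof.
apply/le_anti/andP; split; apply: vabs_le; rewrite ?opprK ?vsup_ubl ?vsup_ubr //.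
by rewrite -[X in X <= _]opprK vsup_ubr.
Qed.

Lemma vdistC x y : vabs (x - y) = vabs (y - x).
Proof. by rewrite -vabsN opprB. Qed.

Lemma vabsD_le x y : vabs (x + y) <= vabs x + vabs y.
Proof. by rewrite vabs_le // ?opprD vlerD ?vsup_ubl ?vsup_ubr. Qed.

Lemma vscale_le_abs (l c : R) x : `|l| <= c -> l *: x <= c *: vabs x.
Proof.
move=> lelc; have [l_ge0|l_lt0] := leP 0 l.
  apply: le_trans (vl_leZ _ _ _ l_ge0 (vsup_ubl x (- x))) _.
  by rewrite vlerZ2r ?vabs_ge0 // -(ger0_norm l_ge0).
rewrite -[l *: x]opprK -scalerN -scaleNr.
apply: le_trans (vl_leZ _ _ _ _ (vsup_ubr x (- x))) _; first by rewrite oppr_ge0 ltW.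
by rewrite vlerZ2r ?vabs_ge0 // -(ltr0_norm l_lt0).
Qed.

Lemma vabsZ_le (l c : R) x : `|l| <= c -> vabs (l *: x) <= c *: vabs x.
Proof. by move=> lelc; rewrite vabs_le ?vscale_le_abs // -scaleNr vscale_le_abs ?normrN. Qed.

Lemma vdist_interval_le c p q :
  ointerval 0 c p -> ointerval 0 c q -> vabs (p - q) <= c.
Proof.
move=> [p_ge0 lepc] [q_ge0 leqc]; rewrite vabs_le // ?opprB.
  by apply: le_trans lepc; apply/vlerBlDr; rewrite addrC vler_wpDl.
by apply: le_trans leqc; apply/vlerBlDr; rewrite addrC vler_wpDl.
Qed.

Lemma vinfC u v : vinf u v = vinf v u.
Proof. by apply/le_anti; rewrite !vinf_greatest ?vinf_lbl ?vinf_lbr. Qed.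

Lemma vleI2 u u' v v' : u <= u' -> v <= v' -> vinf u v <= vinf u' v'.
Proof.
move=> le_u le_v; apply: vinf_greatest.
  exact: le_trans (vinf_lbl _ _) le_u.
exact: le_trans (vinf_lbr _ _) le_v.
Qed.

Lemma vinf_ge0 u v : 0 <= u -> 0 <= v -> 0 <= vinf u v.
Proof. exact: vinf_greatest. Qed.

Lemma vmeet_abs_ge0 u v : 0 <= vmeet (vabs u) (vabs v).
Proof. by rewrite vinf_ge0 ?vabs_ge0. Qed.

Lemma vinf_r u v : v <= u -> vinf u v = v.
Proof. by move=> levu; apply/le_anti; rewrite vinf_lbr vinf_greatest. Qed.

Lemma vinfDr_le x y c : vinf (x + c) (y + c) <= vinf x y + c.
Proof. by apply/vlerBlDr; rewrite vinf_greatest // vlerBlDr ?vinf_lbl ?vinf_lbr. Qed.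

Lemma vinfD_le u v w : 0 <= u -> 0 <= v -> 0 <= w ->
  vinf w (u + v) <= vinf w u + vinf w v.
Proof.
move=> u_ge0 v_ge0 w_ge0; set t := vinf w (u + v).
have letw : t <= w by exact: vinf_lbl.
apply: le_trans (vinfDr_le _ _ _); apply: vinf_greatest.
  rewrite addrC; apply: le_trans (vinfDr_le _ _ _).
  by rewrite vinf_greatest // (le_trans letw) ?vler_wpDl.
rewrite addrC; apply: le_trans (vinfDr_le _ _ _).
by rewrite vinf_greatest // 1?addrC ?vinf_lbr // (le_trans letw) ?vler_wpDl.
Qed.

Lemma vinfMn_le u w n : 0 <= u -> 0 <= w -> vinf w (u *+ n) <= vinf w u *+ n.
Proof.
move=> u_ge0 w_ge0; elim: n => [|n IHn]; first by rewrite !mulr0n vinf_lbr.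
rewrite !mulrS; apply: le_trans (vinfD_le u_ge0 (vmulrn_ge0 n u_ge0) w_ge0) _.
exact: vlerD2l.
Qed.

Lemma principal_ideal_sub (h : F) : 0 <= h -> principal_ideal h `<=` ideal_gen [set h].
Proof.
move=> h_ge0 _ [l [_ [y [[le_Nh_y le_yh] ->]]]] E [_ [_ [EZ Esolid]]] Eh.
apply/EZ/(Esolid _ h); last exact: Eh.
by rewrite (ger0_vabs h_ge0) vabs_le // -(opprK h) vlerN2.
Qed.

Lemma sub_ideal_gen (A : set F) : A `<=` ideal_gen A.
Proof. by move=> a Aa E _; apply. Qed.

Lemma setT_ideal : is_ideal [set: F].
Proof. by []. Qed.

End VectorLatticeTheory.

Lemma conv_closure_sub (R : realType) (F : vectorLatticeType R)
    (eta : convergence F) (G : set F) : G `<=` conv_closure eta G.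
Proof. by move=> x Gx C _; apply. Qed.

Lemma conv_closure_subset (R : realType) (F : vectorLatticeType R)
    (eta : convergence F) (G G' : set F) :
  G `<=` G' -> conv_closure eta G `<=` conv_closure eta G'.
Proof. by move=> GG' x Gx C C_closed G'C; apply: Gx => // y /GG'; apply: G'C. Qed.

Section LocallySolidConvergence.
Variables (R : realType) (F : vectorLatticeType R) (eta : convergence F).
Arguments eta : clear implicits.
Hypothesis eta_ls : ls_additive eta.

Lemma cvg_cst (D : dirType) (x : F) : eta D (fun _ => x) x.
Proof. by case: eta_ls => -[]. Qed.

Lemma cvg_ge0_solid (D : dirType) (e f : D -> F) :
  eta D f 0 -> (forall i, 0 <= e i) -> (forall i, e i <= f i) -> eta D e 0.
Proof.
case: eta_ls => _ [_ [_ solid]] f0 e_ge0 le_ef; apply: solid f0 => i.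
by rewrite !ger0_vabs ?le_ef // (le_trans (e_ge0 i)).
Qed.

Lemma cvg_subr0 (D : dirType) (f : D -> F) x :
  eta D f x <-> eta D (fun i => f i - x) 0.
Proof.
case: eta_ls => _ [cvgD _]; split=> [/cvgD /(_ (cvg_cst D (- x)))|].
  by rewrite subrr.
move=> /cvgD /(_ (cvg_cst D x)); rewrite add0r.
by congr (eta D _ x); apply: funext => i; rewrite subrK.
Qed.

Lemma cvg_abs_sub0 (D : dirType) (f : D -> F) x :
  eta D f x -> eta D (fun i => vabs (f i - x)) 0.
Proof.
case: eta_ls => _ [_ [_ solid]] /cvg_subr0; apply: solid => i.
by rewrite vabs_id.
Qed.

Lemma cvgMn0 (D : dirType) (g : D -> F) n :
  eta D g 0 -> eta D (fun i => g i *+ n) 0.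
Proof.
case: eta_ls => _ [cvgD _] g0; elim: n => [|n IHn].
  by under eq_fun do rewrite mulr0n; exact: cvg_cst.
by under eq_fun do rewrite mulrS; rewrite -[0]addr0; apply: cvgD.
Qed.

Definition meet_null (D : dirType) (y : D -> F) : set F :=
  fun b => eta D (fun i => vmeet (vabs b) (y i)) 0.

Lemma meet_null_ideal (D : dirType) (y : D -> F) :
  (forall i, 0 <= y i) -> is_ideal (meet_null y).
Proof.
move=> y_ge0; rewrite /meet_null /vmeet; split; [|split; [|split]].
- apply: (cvg_ge0_solid (cvg_cst D 0)) => i; first by rewrite vinf_ge0 ?vabs_ge0.
  by rewrite vabs0 vinf_lbl.
- move=> b1 b2 b1y b2y; case: eta_ls => _ [cvgD _].
  have := cvgD _ _ _ _ _ b1y b2y; rewrite addr0 => b12y.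
  apply: (cvg_ge0_solid b12y) => i.
    by rewrite vinf_ge0 ?vabs_ge0.
  rewrite ![vinf _ (y i)]vinfC.
  by apply: le_trans (vleI2 (lexx _) (vabsD_le b1 b2)) _; rewrite vinfD_le ?vabs_ge0.
- move=> l b by0; pose n := Num.Def.archi_bound `|l|.
  have lel : `|l| <= n%:R by rewrite ltW ?archi_boundP.
  apply: (cvg_ge0_solid (cvgMn0 n by0)) => i; first by rewrite vinf_ge0 ?vabs_ge0.
  rewrite ![vinf _ (y i)]vinfC.
  apply: le_trans (vleI2 (lexx _) (vabsZ_le b lel)) _.
  by rewrite scaler_nat vinfMn_le ?vabs_ge0.
- move=> x z lexz zy; apply: (cvg_ge0_solid zy) => i; first by rewrite vinf_ge0 ?vabs_ge0.
  exact: vleI2.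
Qed.

(* Idempotence is applied with the net |b - b_j| -> 0, using
   (|b| /\ y_i - |b - b_j|)^+ <= |b_j| /\ y_i. *)
Lemma meet_null_closed (D : dirType) (y : D -> F) : conv_idempotent eta ->
  (forall i, 0 <= y i) -> conv_closed eta (meet_null y).
Proof.
move=> eta_idem y_ge0 B bs b bsy bs_b; rewrite /meet_null /vmeet.
apply: (eta_idem D B _ (fun j => vabs (b - bs j))) => [i|j||j].
- by rewrite vinf_ge0 ?vabs_ge0.
- exact: vabs_ge0.
- by under eq_fun do rewrite vdistC; exact: cvg_abs_sub0.
apply: (cvg_ge0_solid (bsy j)) => [i|i]; first exact: vsup_ubr.
rewrite vsup_least ?vinf_ge0 ?vabs_ge0 // vlerBlDr.
have := vabsD_le (b - bs j) (bs j); rewrite subrK => le_b.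
apply: le_trans (vleI2 le_b (lexx _)) _.
rewrite ![vinf _ (y i)]vinfC.
apply: le_trans (vinfD_le (vabs_ge0 _) (vabs_ge0 _) (y_ge0 i)) _.
by rewrite addrC vlerD ?vinf_lbr // /vmeet vinfC.
Qed.

Lemma uconvE (A : set F) (D : dirType) (f : D -> F) x :
  uconv A eta D f x <-> A `<=` meet_null (fun i => vabs (f i - x)).
Proof. by []. Qed.

Lemma uconv_ideal_gen (A : set F) (D : dirType) (f : D -> F) x :
  uconv A eta D f x -> uconv (ideal_gen A) eta D f x.
Proof.
move=> /uconvE Af b /(_ (meet_null (fun i => vabs (f i - x)))); apply => //.
by apply: meet_null_ideal => i; apply: vabs_ge0.
Qed.

Lemma uconv_closure_ideal_gen (A : set F) (D : dirType) (f : D -> F) x :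
  conv_idempotent eta ->
  uconv A eta D f x -> uconv (conv_closure eta (ideal_gen A)) eta D f x.
Proof.
move=> eta_idem Af b /(_ (meet_null (fun i => vabs (f i - x)))); apply.
  by apply: meet_null_closed => // i; apply: vabs_ge0.
exact: uconv_ideal_gen.
Qed.

Lemma uconv_sub (A B : set F) : A `<=` B -> conv_stronger (uconv B eta) (uconv A eta).
Proof. by move=> AB D f x Bf a /AB; apply: Bf. Qed.

Lemma cvg_uconv (A : set F) : conv_stronger eta (uconv A eta).
Proof.
move=> D f x /cvg_abs_sub0 fx a _; apply: (cvg_ge0_solid fx) => i.
  exact: vmeet_abs_ge0.
exact: vinf_lbr.
Qed.

Lemma uconv_ls_additive (A : set F) : ls_additive (uconv A eta).
Proof.
case: eta_ls => [[_ subnet] [cvgD _]].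
split; [split|split; [|split]].
- move=> D x a _; rewrite subrr vabs0 /vmeet vinf_r ?vabs_ge0 //; exact: cvg_cst.
- move=> D f x E g fx fg a Aa; apply: subnet (fx a Aa) _ => d.
  have [e0 fge0] := fg d; exists e0 => e /fge0 [d' [le_dd' ->]].
  by exists d'.
- move=> D f g x y fx gy a Aa; have := cvgD _ _ _ _ _ (fx a Aa) (gy a Aa).
  rewrite addr0 => fgxy; apply: (cvg_ge0_solid fgxy) => i.
    exact: vmeet_abs_ge0.
  rewrite /vmeet opprD addrACA.
  by apply: le_trans (vleI2 (lexx _) (vabsD_le _ _)) _; rewrite vinfD_le ?vabs_ge0.
- move=> D f x fx a Aa; under eq_fun do rewrite -opprD vabsN; exact: fx a Aa.
- move=> D e f le_ef f0 a Aa; apply: (cvg_ge0_solid (f0 a Aa)) => i.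
    exact: vmeet_abs_ge0.
  by rewrite !subr0 vleI2.
Qed.

Lemma uconv_stronger_on_interval (A : set F) a :
  A a -> stronger_on (uconv A eta) eta (ointerval 0 (vabs a)).
Proof.
move=> Aa D f x f_in x_in /(_ a Aa) fx; apply/cvg_subr0.
case: eta_ls => _ [_ [_ solid]]; apply: solid fx => i.
by rewrite /vmeet vinf_r ?vabs_id // (vdist_interval_le (f_in i) x_in).
Qed.

Lemma uconv_ge0_cvg0 (A : set F) (D : dirType) (f : D -> F) :
  (forall i, 0 <= f i) ->
  uconv A eta D f 0 <->
  (forall a, A a -> forall g : D -> F,
     (forall i, ointerval 0 (vabs a) (g i)) ->
     (forall i, 0 <= g i /\ g i <= f i) -> eta D g 0).
Proof.
move=> f_ge0; split=> [f0 a Aa g g_in le_gf|g0 a Aa].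
  apply: (cvg_ge0_solid (f0 a Aa)) => i; first by case: (le_gf i).
  by rewrite subr0 (ger0_vabs (f_ge0 i)); apply: vinf_greatest; [case: (g_in i)|case: (le_gf i)].
apply: (g0 a Aa) => i; first by split; [exact: vmeet_abs_ge0 | exact: vinf_lbl].
by split; [exact: vmeet_abs_ge0 | rewrite subr0 (ger0_vabs (f_ge0 i)) vinf_lbr].
Qed.

Lemma uconv_uconv (E H : set F) : is_ideal E -> is_ideal H ->
  conv_eq (uconv H (uconv E eta)) (uconv (E `&` H) eta).
Proof.
move=> [_ [_ [_ E_solid]]] [_ [_ [_ H_solid]]] D f x; split.
  move=> fx b [Eb Hb]; apply: (cvg_ge0_solid (fx b Hb b Eb)) => i.
    exact: vmeet_abs_ge0.
  by rewrite subr0 (ger0_vabs (vmeet_abs_ge0 _ _)); apply: vinf_greatest; rewrite ?vinf_lbl.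
move=> fx a Ha e Ee; set b := vinf (vabs e) (vabs a).
have b_ge0 : 0 <= b by exact: vmeet_abs_ge0.
have EHb : (E `&` H) b.
  split; [apply: E_solid Ee | apply: H_solid Ha];
  by rewrite ger0_vabs ?vinf_lbl ?vinf_lbr.
apply: (cvg_ge0_solid (fx b EHb)) => i; first exact: vmeet_abs_ge0.
rewrite subr0 (ger0_vabs (vmeet_abs_ge0 _ _)) (ger0_vabs b_ge0) /vmeet /b.
apply: vinf_greatest; first apply: vinf_greatest.
- exact: vinf_lbl.
- exact: le_trans (vinf_lbr _ _) (vinf_lbl _ _).
- exact: le_trans (vinf_lbr _ _) (vinf_lbr _ _).
Qed.

Lemma uconvT_topological_unit (h : F) : conv_idempotent eta ->
  topological_unit eta h -> forall (D : dirType) (f : D -> F),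
  (forall i, 0 <= f i) -> uconvT eta D f 0 <-> eta D (fun i => vmeet h (f i)) 0.
Proof.
move=> eta_idem [h_ge0 h_dense] D f f_ge0; split=> [/(_ h I)|hf0].
  by move=> /cvg_ge0_solid; apply=> i; rewrite ?vinf_ge0 // subr0 !ger0_vabs.
have hf : uconv [set h] eta D f 0.
  move=> _ ->; apply: (cvg_ge0_solid hf0) => i; first exact: vmeet_abs_ge0.
  by rewrite subr0 !ger0_vabs.
apply: uconv_sub (uconv_closure_ideal_gen eta_idem hf) => a _.
exact: conv_closure_subset (principal_ideal_sub h_ge0) _ (h_dense a).
Qed.

End LocallySolidConvergence.

Lemma uconv_weakest (R : realType) (F : vectorLatticeType R)
    (eta theta : convergence F) (A : set F) :
  ls_additive theta ->
  (forall a, A a -> stronger_on theta eta (ointerval 0 (vabs a))) ->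
  conv_stronger theta (uconv A eta).
Proof.
move=> theta_ls theta_eta D f x /(cvg_abs_sub0 theta_ls) fx a Aa.
apply: (theta_eta a Aa) => [i||].
- by split; [exact: vmeet_abs_ge0 | exact: vinf_lbl].
- by split; [exact: lexx | exact: vabs_ge0].
apply: (cvg_ge0_solid theta_ls fx) => i; first exact: vmeet_abs_ge0.
exact: vinf_lbr.
Qed.

Theorem proposition3p1 (R : realType)
    (F : vectorLatticeType R) (eta : convergence F) (A E H : set F) :
  ls_additive eta -> is_ideal E -> is_ideal H ->
  (* (i) *)
  (conv_eq (uconv A eta) (uconv (ideal_gen A) eta) /\
   ls_additive (uconv A eta) /\
   (forall a, A a -> stronger_on (uconv A eta) eta (ointerval 0 (vabs a))) /\
   (forall theta : convergence F, ls_additive theta ->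
      (forall a, A a -> stronger_on theta eta (ointerval 0 (vabs a))) ->
      conv_stronger theta (uconv A eta)) /\
   (forall a, A a -> coincide_on (uconv A eta) eta (ointerval 0 (vabs a)))) /\
  (* (ii) *)
  (forall (D : dirType) (f : D -> F), (forall i, (0 <= f i)) ->
     (uconv A eta D f 0 <->
      (forall a, A a -> forall g : D -> F,
         (forall i, ointerval 0 (vabs a) (g i)) ->
         (forall i, (0 <= g i) /\ (g i <= f i)) ->
         eta D g 0))) /\
  (* (iii) *)
  (conv_eq (uconv H (uconv E eta)) (uconv (setI E H) eta) /\
   conv_eq (uconv E (uconvT eta)) (uconv E eta) /\
   conv_eq (uconvT (uconv E eta)) (uconv E eta) /\
   conv_eq (uconv E (uconv E eta)) (uconv E eta)) /\
  (* (iv) *)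
  (conv_idempotent eta ->
     conv_eq (uconv A eta) (uconv (conv_closure eta (ideal_gen A)) eta)) /\
  (* (v) *)
  (forall h : F, conv_idempotent eta -> topological_unit eta h ->
     forall (D : dirType) (f : D -> F), (forall i, (0 <= f i)) ->
       (uconvT eta D f 0 <-> eta D (fun i => vmeet h (f i)) 0)).
Proof.
move=> eta_ls E_ideal H_ideal.
split; [split; [|split; [|split; [|split]]] | split; [|split; [|split]]].
- move=> D f x; split; first exact: uconv_ideal_gen.
  exact: (uconv_sub (@sub_ideal_gen _ _ A)).
- exact: uconv_ls_additive.
- exact: uconv_stronger_on_interval.
- move=> theta; exact: uconv_weakest.
- move=> a Aa; split; first exact: uconv_stronger_on_interval.
  by move=> D f x _ _; apply: cvg_uconv.
- exact: uconv_ge0_cvg0.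
- split; first exact: uconv_uconv.
  rewrite /uconvT; split; [|split].
  + by rewrite -{2}(setTI E); apply: uconv_uconv (setT_ideal F) E_ideal.
  + by rewrite -{2}(setIT E); apply: uconv_uconv E_ideal (setT_ideal F).
  + by rewrite -{3}(setIid E); apply: uconv_uconv.
- move=> eta_idem D f x; split; first exact: uconv_closure_ideal_gen.
  by apply: uconv_sub => a /sub_ideal_gen; apply: conv_closure_sub.
- exact: uconvT_topological_unit.
Qed.
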